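(* Let $\phi\in\Phi$, let $f:\mathbb{R}^n\to(-\infty,+\infty]$ be proper lsc, $\Omega\subseteq\mathbb{R}^n$ closed, $\delta\ge0$, $p\in[1,\infty]$, and $\mathcal{J}=\{J_1,\dots,J_m\}$ a partition of $\{1,\dots,n\}$. Suppose the problem $$\textstyle (P)\quad \min_{x\in\mathbb{R}^n}\{\|G_{\mathcal{J},p}(x)\|_0:\ f(x)\le\delta,\ x\in\Omega\}$$ has a nonempty global optimal solution set and optimal value $s^*$. Consider $$\textstyle (Q)\quad \min_{x\in\mathbb{R}^n,w\in\mathbb{R}^m}\{\sum_{i=1}^m\phi(w_i):\ \langle e-w,G_{\mathcal{J},p}(x)\rangle=0,\ 0\le w\le e,\ x\in\Omega,\ f(x)\le\delta\}.$$ If $x^*$ is a global optimal solution of $(P)$, then $(x^*,\max(\mathrm{sgn}(G_{\mathcal{J},p}(x^* )),t^*e))$ (max taken componentwise) is a global optimal solution of $(Q)$ and the optimal value of $(Q)$ equals $s^*$; conversely, if $(x^*,w^* )$ is a global optimal solution of $(Q)$, then $x^*$ is a global optimal solution of $(P)$.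
   Context: $\Phi$ is the family of proper lsc functions $\phi:\mathbb{R}\to(-\infty,+\infty]$ with $\mathrm{int}(\mathrm{dom}\,\phi)\supseteq[0,1]$, convex on $[0,1]$, such that $\min_{t\in[0,1]}\phi(t)=0$ is attained at a (fixed) point $t^*\in[0,1)$, and $\phi(1)=1$. $G_{\mathcal{J},p}(x):=(\|x_{J_1}\|_p,\dots,\|x_{J_m}\|_p)^T$, where $x_{J_i}$ is the subvector of $x$ indexed by $J_i$; $\|v\|_0$ is the number of nonzero entries of $v$; $e$ is the all-ones vector; $\mathrm{sgn}$ is applied componentwise. *)

From Stdlib Require Import Reals.
From mathcomp Require Import ssreflect ssrfun ssrbool eqtype ssrnat seq fintype.
Set Implicit Arguments.
Unset Strict Implicit.
Open Scope R_scope.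

Inductive erl := Fin (r : R) | PInf.

Definition ele (a b : erl) : Prop :=
  match a, b with
  | _, PInf => True
  | PInf, Fin _ => False
  | Fin x, Fin y => x <= y
  end.

Definition elt_real (a : R) (b : erl) : Prop :=
  match b with PInf => True | Fin y => a < y end.

Definition eplus (a b : erl) : erl :=
  match a, b with Fin x, Fin y => Fin (x + y) | _, _ => PInf end.

Definition vec (n : nat) := 'I_n -> R.

Definition sumI (n : nat) (F : 'I_n -> R) : R :=
  foldr Rplus 0 (map F (enum 'I_n)).

(* sup-norm distance on R^n (all norms equivalent: topology of R^n) *)
Definition supdist (n : nat) (x y : vec n) : R :=
  foldr Rmax 0 (map (fun j => Rabs (x j - y j)) (enum 'I_n)).

Definition proper_vec (n : nat) (f : vec n -> erl) : Prop := exists x, f x <> PInf.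

Definition lsc_vec (n : nat) (f : vec n -> erl) : Prop :=
  forall x a, elt_real a (f x) ->
    exists r, 0 < r /\ forall y, supdist x y < r -> elt_real a (f y).

Definition closed_vec (n : nat) (S : vec n -> Prop) : Prop :=
  forall x, (forall eps, 0 < eps -> exists y, S y /\ supdist x y < eps) -> S x.

Definition proper_R (phi : R -> erl) : Prop := exists t, phi t <> PInf.

Definition lsc_R (phi : R -> erl) : Prop :=
  forall t a, elt_real a (phi t) ->
    exists r, 0 < r /\ forall u, Rabs (u - t) < r -> elt_real a (phi u).

Definition in_Phi (phi : R -> erl) (tstar : R) : Prop :=
  proper_R phi /\ lsc_R phi /\
  (* int(dom phi) contains [0,1] *)
  (exists a b, a < 0 /\ 1 < b /\ forall t, a < t < b -> phi t <> PInf) /\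
  (forall s t l a c d, 0 <= s <= 1 -> 0 <= t <= 1 -> 0 <= l <= 1 ->
     phi s = Fin a -> phi t = Fin c -> phi (l * s + (1 - l) * t) = Fin d ->
     d <= l * a + (1 - l) * c) /\
  0 <= tstar < 1 /\ phi tstar = Fin 0 /\
  (forall t, 0 <= t <= 1 -> ele (Fin 0) (phi t)) /\
  phi 1 = Fin 1.

Inductive pexp := PFin (p : R) | PInfty.
Definition valid_p (p : pexp) : Prop :=
  match p with PFin q => 1 <= q | PInfty => True end.

Definition rpow (a q : R) : R :=
  if Req_EM_T a 0 then 0 else Rpower a q.

Definition pnorm_sub (n : nat) (J : 'I_n -> bool) (p : pexp) (x : vec n) : R :=
  match p with
  | PFin q => rpow (foldr Rplus 0
                      (map (fun j => rpow (Rabs (x j)) q) (filter J (enum 'I_n))))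
                   (1 / q)
  | PInfty => foldr Rmax 0 (map (fun j => Rabs (x j)) (filter J (enum 'I_n)))
  end.

(* A partition J = {J_1,...,J_m} of {1..n} is given by the block map
   b : 'I_n -> 'I_m (J_i = b^{-1}(i)), surjective so that blocks are nonempty. *)
Definition G (n m : nat) (b : 'I_n -> 'I_m) (p : pexp) (x : vec n) : 'I_m -> R :=
  fun i => pnorm_sub (fun j => b j == i) p x.

Definition l0 (m : nat) (v : 'I_m -> R) : nat :=
  count (fun i => if Req_EM_T (v i) 0 then false else true) (enum 'I_m).

Definition sgn (r : R) : R :=
  if Rlt_dec 0 r then 1 else if Rlt_dec r 0 then -1 else 0.

Definition feasP (n : nat) (f : vec n -> erl) (Omega : vec n -> Prop) (delta : R)
  (x : vec n) : Prop := ele (f x) (Fin delta) /\ Omega x.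

Definition optP (n m : nat) (b : 'I_n -> 'I_m) (p : pexp) (f : vec n -> erl)
  (Omega : vec n -> Prop) (delta : R) (x : vec n) : Prop :=
  feasP f Omega delta x /\
  forall y, feasP f Omega delta y -> (l0 (G b p x) <= l0 (G b p y))%nat.

Definition optvalP (n m : nat) (b : 'I_n -> 'I_m) (p : pexp) (f : vec n -> erl)
  (Omega : vec n -> Prop) (delta : R) (s : nat) : Prop :=
  (exists x, feasP f Omega delta x /\ l0 (G b p x) = s) /\
  forall y, feasP f Omega delta y -> (s <= l0 (G b p y))%nat.

Definition feasQ (n m : nat) (b : 'I_n -> 'I_m) (p : pexp) (f : vec n -> erl)
  (Omega : vec n -> Prop) (delta : R) (x : vec n) (w : 'I_m -> R) : Prop :=
  sumI (fun i => (1 - w i) * G b p x i) = 0 /\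
  (forall i, 0 <= w i <= 1) /\ Omega x /\ ele (f x) (Fin delta).

Definition objQ (m : nat) (phi : R -> erl) (w : 'I_m -> R) : erl :=
  foldr eplus (Fin 0) (map (fun i => phi (w i)) (enum 'I_m)).

Definition optQ (n m : nat) (b : 'I_n -> 'I_m) (p : pexp) (phi : R -> erl)
  (f : vec n -> erl) (Omega : vec n -> Prop) (delta : R)
  (x : vec n) (w : 'I_m -> R) : Prop :=
  feasQ b p f Omega delta x w /\
  forall y v, feasQ b p f Omega delta y v -> ele (objQ phi w) (objQ phi v).

Definition optvalQ (n m : nat) (b : 'I_n -> 'I_m) (p : pexp) (phi : R -> erl)
  (f : vec n -> erl) (Omega : vec n -> Prop) (delta : R) (v : erl) : Prop :=
  (exists x w, feasQ b p f Omega delta x w /\ objQ phi w = v) /\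
  forall y u, feasQ b p f Omega delta y u -> ele v (objQ phi u).

(* A feasible point (x, w) of (Q) satisfies complementarity with G(x) >= 0 and
   0 <= w <= e, so w_i = 1 wherever G_i(x) <> 0; as phi >= 0 on [0,1] and
   phi(1) = 1, the objective of (Q) is at least ||G(x)||_0.  Conversely, for x
   feasible in (P), the weight max(sgn G(x), t* e) is 1 on the support of G(x)
   and t* off it, so it is feasible in (Q) with objective exactly ||G(x)||_0. *)
From Stdlib Require Import Reals Lra.
From mathcomp Require Import ssreflect ssrfun ssrbool eqtype ssrnat seq fintype.
Set Implicit Arguments.
Unset Strict Implicit.
Open Scope R_scope.

Lemma foldr_Rmax_ge0 (l : seq R) : 0 <= foldr Rmax 0 l.
Proof. elim: l => [|a l IH] /=; [lra|]. have := Rmax_r a (foldr Rmax 0 l); lra. Qed.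

Lemma foldr_Rplus_ge0 {A : Type} (F : A -> R) (l : seq A) :
  (forall i, 0 <= F i) -> 0 <= foldr Rplus 0 (map F l).
Proof. move=> F_ge0; elim: l => [|a l IH] /=; [lra|]. have := F_ge0 a; lra. Qed.

Lemma foldr_Rplus_eq0 {A : eqType} (F : A -> R) (l : seq A) :
  (forall i, 0 <= F i) -> foldr Rplus 0 (map F l) = 0 ->
  forall i, i \in l -> F i = 0.
Proof.
move=> F_ge0; elim: l => [|a l IH] //= sum0 i.
have := foldr_Rplus_ge0 l F_ge0; have := F_ge0 a.
rewrite in_cons => ? ? /orP [/eqP ->|il]; first lra.
apply: IH il; lra.
Qed.

Lemma foldr_eplus_Fin {A : Type} (F : A -> erl) (g : A -> R) (l : seq A) :
  (forall i, F i = Fin (g i)) ->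
  foldr eplus (Fin 0) (map F l) = Fin (foldr Rplus 0 (map g l)).
Proof. by move=> Fg; elim: l => [|a l IH] //=; rewrite IH Fg. Qed.

Lemma count_le_foldr_Rplus {A : Type} (P : pred A) (g : A -> R) (l : seq A) :
  (forall i, 0 <= g i) -> (forall i, P i -> g i = 1) ->
  INR (count P l) <= foldr Rplus 0 (map g l).
Proof.
move=> g_ge0 gP; elim: l => [|a l IH] /=; [lra|].
case Pa: (P a).
- rewrite add1n S_INR (gP a Pa); lra.
- rewrite add0n; have := g_ge0 a; lra.
Qed.

Lemma count_eq_foldr_Rplus {A : Type} (P : pred A) (l : seq A) :
  INR (count P l) = foldr Rplus 0 (map (fun i => if P i then 1 else 0) l).
Proof.
elim: l => [|a l IH] //=; rewrite -IH.
by case: (P a); [rewrite add1n S_INR | rewrite add0n]; lra.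
Qed.

Lemma rpow_ge0 a q : 0 <= rpow a q.
Proof.
rewrite /rpow; case: (Req_EM_T a 0) => ? /=; first lra.
left; exact: exp_pos.
Qed.

Lemma G_ge0 n m (b : 'I_n -> 'I_m) p x i : 0 <= G b p x i.
Proof. by case: p => [q|]; [apply: rpow_ge0 | apply: foldr_Rmax_ge0]. Qed.

Lemma in_Phi_Fin_ge0 (phi : R -> erl) (tstar : R) : in_Phi phi tstar ->
  forall t, 0 <= t <= 1 -> exists r, phi t = Fin r /\ 0 <= r.
Proof.
rewrite /in_Phi => - [_ [_ [[a [c [a_lt0 [c_gt1 dom]]]] [_ [_ [_ [phi_ge0 _]]]]]]] t t01.
have := dom t ltac:(lra); have := phi_ge0 t t01.
by case: (phi t) => [r|] //= r_ge0 _; exists r.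
Qed.

Lemma feasQ_feasP n m (b : 'I_n -> 'I_m) p f Omega delta x w :
  feasQ b p f Omega delta x w -> feasP f Omega delta x.
Proof. by case=> [_ [_ [Om fx]]]. Qed.

Section Relaxation.

Variables (phi : R -> erl) (tstar : R).
Hypothesis phi_Fin_ge0 : forall t, 0 <= t <= 1 -> exists r, phi t = Fin r /\ 0 <= r.
Hypothesis phi1 : phi 1 = Fin 1.
Hypothesis phi_tstar : phi tstar = Fin 0.
Hypothesis tstar01 : 0 <= tstar <= 1.

Lemma objQ_ge_l0 {m : nat} (g w : 'I_m -> R) :
  (forall i, 0 <= g i) -> (forall i, 0 <= w i <= 1) ->
  sumI (fun i => (1 - w i) * g i) = 0 ->
  exists r, objQ phi w = Fin r /\ INR (l0 g) <= r.
Proof.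
move=> g_ge0 w01 compl.
have compl_i : forall i, (1 - w i) * g i = 0.
  move=> i; apply: (foldr_Rplus_eq0 _ compl); last by rewrite mem_enum.
  by move=> j; have := g_ge0 j; have := w01 j; nra.
pose val (e : erl) := if e is Fin r then r else 0.
have phi_w : forall i, phi (w i) = Fin (val (phi (w i))).
  by move=> i; have [r [-> _]] := phi_Fin_ge0 (w01 i).
exists (foldr Rplus 0 (map (fun i => val (phi (w i))) (enum 'I_m))).
split; first exact: foldr_eplus_Fin phi_w.
apply: count_le_foldr_Rplus => i.
  by have [r [-> r_ge0]] := phi_Fin_ge0 (w01 i).
case: (Req_EM_T (g i) 0) => // gi_neq0 _.
have [w1|] := Rmult_integral _ _ (compl_i i); last by [].
have -> : w i = 1 by lra.
by rewrite phi1.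
Qed.

Definition support_weight {m : nat} (g : 'I_m -> R) (i : 'I_m) := Rmax (sgn (g i)) tstar.

Lemma support_weightE {m : nat} (g : 'I_m -> R) i : 0 <= g i ->
  support_weight g i = if Req_EM_T (g i) 0 then tstar else 1.
Proof.
rewrite /support_weight /sgn => gi_ge0.
case: (Req_EM_T (g i) 0) => [gi0|gi_neq0] /=.
- rewrite gi0; case: Rlt_dec => [|_] /=; first lra.
  rewrite Rmax_right; lra.
- case: Rlt_dec => [_|] /=; last lra.
  rewrite Rmax_left; lra.
Qed.

Lemma support_weight_feas {m : nat} (g : 'I_m -> R) : (forall i, 0 <= g i) ->
  (forall i, 0 <= support_weight g i <= 1) /\
  sumI (fun i => (1 - support_weight g i) * g i) = 0.
Proof.
move=> g_ge0; split=> [i|].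
  by rewrite support_weightE //; case: (Req_EM_T (g i) 0) => ? /=; lra.
rewrite /sumI; elim: (enum 'I_m) => [|i l IH] //=.
rewrite IH support_weightE //; case: (Req_EM_T (g i) 0) => [gi0|_] /=.
- by rewrite gi0; ring.
- ring.
Qed.

Lemma objQ_support_weight {m : nat} (g : 'I_m -> R) : (forall i, 0 <= g i) ->
  objQ phi (support_weight g) = Fin (INR (l0 g)).
Proof.
move=> g_ge0; rewrite /objQ /l0 count_eq_foldr_Rplus.
apply: foldr_eplus_Fin => i; rewrite support_weightE //.
by case: (Req_EM_T (g i) 0).
Qed.

End Relaxation.

Lemma feasQ_objQ_ge_l0 phi tstar n m (b : 'I_n -> 'I_m) p f Omega delta y v :
  in_Phi phi tstar -> feasQ b p f Omega delta y v ->
  exists r, objQ phi v = Fin r /\ INR (l0 (G b p y)) <= r.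
Proof.
move=> Hphi [compl [v01 _]]; have [_ [_ [_ [_ [_ [_ [_ phi1]]]]]]] := Hphi.
exact: (objQ_ge_l0 (in_Phi_Fin_ge0 Hphi) phi1 (G_ge0 b p y) v01 compl).
Qed.

Lemma feasP_support_weight phi tstar n m (b : 'I_n -> 'I_m) p f Omega delta x :
  in_Phi phi tstar -> feasP f Omega delta x ->
  feasQ b p f Omega delta x (support_weight tstar (G b p x)) /\
  objQ phi (support_weight tstar (G b p x)) = Fin (INR (l0 (G b p x))).
Proof.
move=> [_ [_ [_ [_ [tstar01 [phi_tstar [_ phi1]]]]]]] [fx Om].
have tstar01' : 0 <= tstar <= 1 by lra.
have [w01 compl] := support_weight_feas tstar01' (G_ge0 b p x).
by rewrite (objQ_support_weight phi1 phi_tstar tstar01' (G_ge0 b p x)).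
Qed.

Theorem lemma3p1 (n m : nat) (b : 'I_n -> 'I_m)
  (Hpart : forall i : 'I_m, exists j : 'I_n, b j = i)
  (phi : R -> erl) (tstar : R) (Hphi : in_Phi phi tstar)
  (f : vec n -> erl) (Hfp : proper_vec f) (Hfl : lsc_vec f)
  (Omega : vec n -> Prop) (HOm : closed_vec Omega)
  (delta : R) (Hdelta : 0 <= delta)
  (p : pexp) (Hp : valid_p p)
  (s : nat)
  (Hsol : exists x, optP b p f Omega delta x)
  (Hs : optvalP b p f Omega delta s) :
  (forall xs, optP b p f Omega delta xs ->
     optQ b p phi f Omega delta xs (fun i => Rmax (sgn (G b p xs i)) tstar) /\
     optvalQ b p phi f Omega delta (Fin (INR s))) /\
  (forall xs ws, optQ b p phi f Omega delta xs ws -> optP b p f Omega delta xs).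
Proof.
have [[x0 [feas_x0 <-]] x0_min] := Hs.
have Q_ge y u : feasQ b p f Omega delta y u ->
    ele (Fin (INR (l0 (G b p x0)))) (objQ phi u).
  move=> yu; have [r [-> le_r]] := feasQ_objQ_ge_l0 Hphi yu.
  have /leP /le_INR := x0_min y (feasQ_feasP yu); rewrite /ele; lra.
split=> [xs [feas_xs xs_min] | xs ws [feasQ_xs ws_min]].
- have [feasQ_ws obj_ws] := feasP_support_weight b p Hphi feas_xs.
  have opt_xs : l0 (G b p xs) = l0 (G b p x0).
    by apply/eqP; rewrite eqn_leq xs_min // x0_min.
  rewrite opt_xs in obj_ws.
  split; first by split=> // y u; rewrite obj_ws; exact: Q_ge.
  by split=> //; exists xs, (support_weight tstar (G b p xs)).
- split; first exact: feasQ_feasP feasQ_xs.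
  move=> y feas_y; apply: leq_trans (x0_min y feas_y).
  have [feasQ_w0 obj_w0] := feasP_support_weight b p Hphi feas_x0.
  have := ws_min _ _ feasQ_w0; rewrite obj_w0.
  have [r [-> le_r]] := feasQ_objQ_ge_l0 Hphi feasQ_xs.
  by rewrite /ele => r_le; apply/leP/INR_le; lra.
Qed.
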